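(* For each integer $r\ge2$ there is a constant $C(r)$ such that the following holds. Let $K\ge1$ and $N\le r(K+1)$ be positive integers, let $y:=r-N/(K+1)\ge0$, and let $\iota\ge1$ be an integer. Then the number of sequences $\mathbf j=(j_1,\dots,j_r)$ of distinct elements of $\mathbb Z/N\mathbb Z$ with $M(r+1,\mathbf j)=\iota$ is at most $C(r)\,N\,(yK+\iota)^{r-2}$.
   Context: For a sequence $\mathbf j=(j_1,\dots,j_r)$ of distinct elements of $\mathbb Z/N\mathbb Z\cong\{1,\dots,N\}$ and $1\le s\le r+1$, let $\mathrm{missed}(s,\mathbf j):=\{i\in\{1,\dots,N\}: i-j_t\notin\{0,1,\dots,K\}\ (\mathrm{mod}\ N)\text{ for all }t<s\}$ and $M(s,\mathbf j):=|\mathrm{missed}(s,\mathbf j)|$. *)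

(* Z/NZ is represented by 'I_N (residues 0..N-1). *)
From mathcomp Require Import all_boot all_order all_algebra.
Set Implicit Arguments. Unset Strict Implicit. Unset Printing Implicit Defensive.

Definition cdiff (N : nat) (i j : 'I_N) : nat := (i + N - j) %% N.

(* missed(s, j) = { i : i - j_t notin {0,...,K} (mod N) for all t < s },
   with j = (j_1,...,j_r) stored 0-based as a tuple (j_t = tnth j (t-1)). *)
Definition missed (N K r s : nat) (j : r.-tuple 'I_N) : {set 'I_N} :=
  [set i : 'I_N | [forall t : 'I_r, (t.+1 < s) ==> (K < cdiff i (tnth j t))]].

Definition M (N K r s : nat) (j : r.-tuple 'I_N) : nat := #|missed K s j|.

From mathcomp Require Import all_boot all_order all_algebra.
From mathcomp Require Import zify ring lra.
Import Order.TTheory GRing.Theory Num.Theory.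
Set Implicit Arguments. Unset Strict Implicit. Unset Printing Implicit Defensive.

(* Let g_t be the gap from the t-th point of j to the next point of j around
   Z/NZ.  After all r steps the missed points of a gap are those more than K
   beyond its left end, so M(r+1, j) = sum_t (g_t - K - 1)^+ while
   sum_t g_t = N; hence sum_t (K + 1 - g_t)^+ = D := r(K+1) - N + iota
   = y(K+1) + iota, and every gap lies within D of K + 1.  A configuration is
   determined by its first point, its successor map, one gap above and one gap
   below K + 1, and the other r - 2 gaps: the two distinguished gaps are
   recovered from the two sums.  This leaves at most N r^(r+2) (2D+1)^(r-2)
   configurations, and 2D + 1 <= 4 (yK + iota). *)


Section CyclicDistance.

Variable N : nat.
Implicit Types a b c i : 'I_N.

Lemma cdiffE i c : cdiff i c = if c <= i then i - c else i + N - c.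
Proof.
rewrite /cdiff; have := ltn_ord i; have := ltn_ord c.
case: ifP => le_ci lt_c lt_i; last by rewrite modn_small //; lia.
by rewrite -addnBAC // modnDr modn_small //; lia.
Qed.

Lemma ltn_cdiff i c : cdiff i c < N.
Proof. by rewrite cdiffE; have := ltn_ord i; have := ltn_ord c; case: ifP; lia. Qed.

Lemma cdiff_eq0 i c : (cdiff i c == 0) = (i == c).
Proof.
rewrite cdiffE -val_eqE /=; have := ltn_ord i; have := ltn_ord c.
by case: ifP; case: eqVneq; lia.
Qed.

Lemma cdiff_injl c : injective (fun i => cdiff i c).
Proof.
move=> i i' /=; rewrite !cdiffE => E; apply: val_inj; move: E => /=.
by have := ltn_ord i; have := ltn_ord i'; have := ltn_ord c; do 2 case: ifP; lia.
Qed.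

Lemma cdiff_injr i : injective (cdiff i).
Proof.
move=> c c'; rewrite !cdiffE => E; apply: val_inj; move: E => /=.
by have := ltn_ord i; have := ltn_ord c; have := ltn_ord c'; do 2 case: ifP; lia.
Qed.

Lemma cdiffD a b c :
  cdiff b a + cdiff a c = cdiff b c \/ cdiff b a + cdiff a c = cdiff b c + N.
Proof.
rewrite !cdiffE; have := ltn_ord a; have := ltn_ord b; have := ltn_ord c.
by do 3 case: ifP; lia.
Qed.

Lemma card_ord_range lo hi : hi <= N -> #|[set k : 'I_N | lo <= k < hi]| = hi - lo.
Proof.
move=> le_hiN; rewrite -sum1dep_card.
rewrite -(big_ord_widen_cond N (fun k => true && (lo <= k)) (fun=> 1) le_hiN).
by rewrite -(big_geq_mkord lo hi predT (fun=> 1)) sum_nat_const_nat muln1.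
Qed.

Lemma card_cdiff_range c lo hi :
  hi <= N -> #|[set i | lo <= cdiff i c < hi]| = hi - lo.
Proof.
move=> le_hiN; rewrite -(card_ord_range lo le_hiN).
pose shift i := Ordinal (ltn_cdiff i c).
have inj_shift : injective shift by move=> i i' /(congr1 val) /cdiff_injl.
by rewrite -[RHS](card_preimset _ inj_shift); apply: eq_card => i; rewrite !inE.
Qed.

End CyclicDistance.

Section Gaps.

Variables (N n : nat) (j : n.+2.-tuple 'I_N).

(* Giving [t] itself the weight [N], larger than every [cdiff], excludes it. *)
Definition next_pt (t : 'I_n.+2) : 'I_n.+2 :=
  [arg min_(q < t) (if q == t then N else cdiff (tnth j q) (tnth j t))].

Definition gap t := cdiff (tnth j (next_pt t)) (tnth j t).

Definition arc t := [set i | cdiff i (tnth j t) < gap t].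

Definition owner i := [arg min_(t < ord0) cdiff i (tnth j t)].

Lemma next_pt_neq t : next_pt t != t.
Proof.
rewrite /next_pt; case: arg_minnP => // p _ min_p; apply/eqP => p_t.
have := min_p (lift t ord0) isT; rewrite p_t eqxx eq_sym (negbTE (neq_lift t ord0)).
by rewrite leqNgt ltn_cdiff.
Qed.

Lemma gap_min t q : q != t -> gap t <= cdiff (tnth j q) (tnth j t).
Proof.
move: (next_pt_neq t); rewrite /gap /next_pt.
case: arg_minnP => // p _ min_p /negbTE p_t /negbTE q_t.
by have := min_p q isT; rewrite p_t q_t.
Qed.

Lemma arc_nearest t i s : i \in arc t -> cdiff i (tnth j t) <= cdiff i (tnth j s).
Proof.
rewrite inE => i_t; have [-> // | s_t] := eqVneq s t.
have := gap_min s_t; have := ltn_cdiff (tnth j s) (tnth j t).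
by case: (cdiffD (tnth j s) i (tnth j t)); lia.
Qed.

Hypothesis uniq_j : uniq j.

Let inj_j : injective (tnth j) := elimT (tuple_uniqP j) uniq_j.

Lemma gap_gt0 t : 0 < gap t.
Proof. by rewrite lt0n cdiff_eq0; apply: contra (next_pt_neq t) => /eqP/inj_j->. Qed.

Lemma owner_arc i : i \in arc (owner i).
Proof.
rewrite inE ltnNge; apply/negP; rewrite /owner; case: arg_minnP => // t _ min_t le_gap.
have := min_t (next_pt t) isT; have := gap_gt0 t; have := ltn_cdiff i (tnth j (next_pt t)).
by move: le_gap; rewrite /gap; case: (cdiffD (tnth j (next_pt t)) i (tnth j t)); lia.
Qed.

Lemma mem_arc i t : (i \in arc t) = (owner i == t).
Proof.
apply/idP/eqP => [i_t | <-]; last exact: owner_arc.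
apply/inj_j/(@cdiff_injr _ i)/eqP.
by rewrite eqn_leq (arc_nearest _ (owner_arc i)) (arc_nearest _ i_t).
Qed.

Lemma card_arcs (S : {set 'I_N}) : #|S| = \sum_t #|S :&: arc t|.
Proof.
rewrite -sum1_card (partition_big owner predT) //=; apply: eq_bigr => t _.
by rewrite -sum1_card; apply: eq_bigl => i; rewrite -mem_arc !inE.
Qed.

Lemma sum_gap : \sum_t gap t = N.
Proof.
rewrite -[RHS]card_ord -cardsT (card_arcs setT); apply: eq_bigr => t _.
have -> : setT :&: arc t = [set i | 0 <= cdiff i (tnth j t) < gap t].
  by apply/setP => i; rewrite !inE.
by rewrite card_cdiff_range ?subn0 // ltnW ?ltn_cdiff.
Qed.

Lemma M_sum_excess K : M K n.+3 j = \sum_t (gap t - K.+1).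
Proof.
rewrite /M (card_arcs (missed _ _ _)); apply: eq_bigr => t _.
have -> : missed K n.+3 j :&: arc t = [set i | K.+1 <= cdiff i (tnth j t) < gap t].
  apply/setP => i; rewrite !inE.
  case lt_gap: (cdiff i (tnth j t) < gap t); rewrite ?andbF ?andbT //.
  have i_t : i \in arc t by rewrite inE.
  apply/forallP/idP => [/(_ t) | lt_K s]; first by rewrite ltnS ltn_ord.
  by apply/implyP => _; apply: leq_trans lt_K (arc_nearest s i_t).
by rewrite card_cdiff_range // ltnW ?ltn_cdiff.
Qed.

Lemma exists_prev_pt t0 s : s != t0 ->
  exists2 p, next_pt p = s & cdiff (tnth j p) (tnth j t0) < cdiff (tnth j s) (tnth j t0).
Proof.
move=> s_t0; have t0_s : t0 != s by rewrite eq_sym.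
case: (@arg_minnP _ t0 (predC1 s) (fun q => cdiff (tnth j s) (tnth j q)) t0_s).
move=> p p_s min_p; have s_p : s != p by rewrite eq_sym.
have dist_gt0 : 0 < cdiff (tnth j s) (tnth j p) by rewrite lt0n cdiff_eq0 (inj_eq inj_j).
exists p.
  apply/eqP/negPn/negP => next_s.
  have := gap_min s_p; have := min_p _ next_s; have := gap_gt0 p.
  have := ltn_cdiff (tnth j s) (tnth j (next_pt p)).
  by rewrite /gap; case: (cdiffD (tnth j (next_pt p)) (tnth j s) (tnth j p)); lia.
have := min_p t0 t0_s; have := ltn_cdiff (tnth j p) (tnth j t0).
by case: (cdiffD (tnth j p) (tnth j s) (tnth j t0)); lia.
Qed.

End Gaps.

Lemma tuple_from_gaps N n (j j' : n.+2.-tuple 'I_N) : uniq j ->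
  tnth j ord0 = tnth j' ord0 -> next_pt j =1 next_pt j' -> gap j =1 gap j' -> j = j'.
Proof.
move=> uniq_j eq0 eq_next eq_gap; apply: eq_from_tnth.
suff eq_near d s : cdiff (tnth j s) (tnth j ord0) < d -> tnth j s = tnth j' s.
  by move=> s; apply: (eq_near N); apply: ltn_cdiff.
elim: d s => // d IHd s lt_sd; have [-> // | s_0] := eqVneq s ord0.
have [p next_p lt_ps] := exists_prev_pt uniq_j s_0.
have eq_p := IHd p (leq_trans lt_ps lt_sd).
apply: (@cdiff_injl _ (tnth j p)) => /=.
by have := eq_gap p; rewrite /gap -eq_next next_p -eq_p.
Qed.

Lemma leq_sum_term (I : finType) (F : I -> nat) i : F i <= \sum_k F k.
Proof. by rewrite (bigD1 i) //= leq_addr. Qed.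

Lemma sum_subn_flip (I : finType) (F : I -> nat) c :
  \sum_i (c - F i) = #|I| * c + \sum_i (F i - c) - \sum_i F i.
Proof.
have : \sum_i (F i + (c - F i)) = \sum_i (c + (F i - c)).
  by apply: eq_bigr => i _; lia.
by rewrite !big_split /= sum_nat_const cardT -cardE; lia.
Qed.

Lemma arg_max_gt (I : finType) (i0 : I) (F : I -> nat) c :
  0 < \sum_i (F i - c) -> c < F [arg max_(i > i0) F i].
Proof.
case: arg_maxnP => // m _ max_m pos; rewrite ltnNge; apply/negP => le_mc.
by move: pos; rewrite big1 // => i _; apply/eqP; rewrite subn_eq0 (leq_trans (max_m i _)).
Qed.

Lemma arg_min_lt (I : finType) (i0 : I) (F : I -> nat) c :
  0 < \sum_i (c - F i) -> F [arg min_(i < i0) F i] < c.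
Proof.
case: arg_minnP => // m _ min_m pos; rewrite ltnNge; apply/negP => le_cm.
by move: pos; rewrite big1 // => i _; apply/eqP; rewrite subn_eq0 (leq_trans le_cm (min_m i _)).
Qed.

Lemma eqfun_from_sums (I : finType) (F G : I -> nat) c a b : a != b ->
  c <= F a -> c <= G a -> F b <= c -> G b <= c ->
  \sum_i F i = \sum_i G i -> \sum_i (F i - c) = \sum_i (G i - c) ->
  (forall i, i != a -> i != b -> F i = G i) -> F =1 G.
Proof.
move=> a_b c_Fa c_Ga Fb_c Gb_c eq_sum eq_exc eq_off.
have split2 (H : I -> nat) : \sum_i H i = H a + H b + \sum_(i | (i != a) && (i != b)) H i.
  by rewrite (bigD1 a) //= (bigD1 b) 1?eq_sym //= addnA.
have eq_rest (H : nat -> nat) :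
    \sum_(i | (i != a) && (i != b)) H (F i) = \sum_(i | (i != a) && (i != b)) H (G i).
  by apply: eq_bigr => i /andP[i_a i_b]; rewrite eq_off.
have eq_a : F a = G a.
  move: eq_exc; rewrite split2 [RHS]split2 (eq_rest (subn^~ c)); lia.
have eq_b : F b = G b.
  move: eq_sum; rewrite split2 [RHS]split2 (eq_rest id) /= eq_a; lia.
move=> i; have [-> // | i_a] := eqVneq i a; have [-> // | i_b] := eqVneq i b.
exact: eq_off.
Qed.

Definition lift2 n (a b : 'I_n.+2) (k : 'I_n) : 'I_n.+2 :=
  lift a (lift (odflt ord0 (unlift a b)) k).

Lemma lift2_onto n (a b t : 'I_n.+2) : a != b -> t != a -> t != b ->
  exists k, t = lift2 a b k.
Proof.
move=> a_b; rewrite eq_sym => a_t t_b.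
rewrite /lift2; have [b' eq_b ->] := unlift_some a_b; have [u eq_t _] := unlift_some a_t.
have b'_u : b' != u by apply: contra t_b => /eqP b'_u; rewrite eq_t eq_b b'_u.
by have [k eq_u _] := unlift_some b'_u; exists k; rewrite eq_t eq_u.
Qed.

Definition deficit r N K iota := r * K.+1 + iota - N.

Definition gap_code D c g : 'I_(2 * D).+1 := inord (g + D - c).

Lemma gap_code_inj D c g g' : g - c <= D -> c - g <= D -> g' - c <= D -> c - g' <= D ->
  gap_code D c g = gap_code D c g' -> g = g'.
Proof. by move=> ? ? ? ? /(congr1 (@nat_of_ord _)); rewrite !inordK; lia. Qed.

Definition long_gap N n (j : n.+2.-tuple 'I_N) := [arg max_(t > ord0) gap j t].
Definition short_gap N n (j : n.+2.-tuple 'I_N) := [arg min_(t < ord0) gap j t].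

Section Encoding.

Variables (N K iota n : nat).
Hypotheses (iota_gt0 : 0 < iota) (le_N : N <= n.+2 * K.+1).

Local Notation D := (deficit n.+2 N K iota).

Definition configs := [set j : n.+2.-tuple 'I_N | uniq j && (M K n.+3 j == iota)].

Definition encode (j : n.+2.-tuple 'I_N) :=
  (tnth j ord0, [ffun t => next_pt j t], long_gap j, short_gap j,
   [ffun k => gap_code D K.+1 (gap j (lift2 (long_gap j) (short_gap j) k))]).

Lemma config_gaps j : j \in configs ->
  [/\ uniq j, \sum_t gap j t = N, \sum_t (gap j t - K.+1) = iota
    & \sum_t (K.+1 - gap j t) = D].
Proof.
rewrite inE => /andP[uniq_j /eqP M_j].
have sum_exc : \sum_t (gap j t - K.+1) = iota by rewrite -M_j M_sum_excess.
split => //; first exact: sum_gap.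
by rewrite sum_subn_flip card_ord sum_exc (sum_gap uniq_j).
Qed.

Lemma gap_near j t : j \in configs -> gap j t - K.+1 <= D /\ K.+1 - gap j t <= D.
Proof.
case/config_gaps=> _ _ sum_exc sum_def; split.
  have := leq_sum_term (fun s => gap j s - K.+1) t; rewrite sum_exc /deficit; lia.
by rewrite -sum_def (leq_sum_term (fun s => K.+1 - gap j s)).
Qed.

Lemma long_short_gap j : j \in configs ->
  K.+1 < gap j (long_gap j) /\ gap j (short_gap j) < K.+1.
Proof.
case/config_gaps=> _ _ sum_exc sum_def.
by split; [apply: arg_max_gt; rewrite sum_exc | apply: arg_min_lt; rewrite sum_def /deficit]; lia.
Qed.

Lemma encode_inj : {in configs &, injective encode}.
Proof.
move=> j j' cj cj' [eq0 eq_next eq_long eq_short eq_code].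
have [uniq_j sum_j exc_j _] := config_gaps cj; have [_ sum_j' exc_j' _] := config_gaps cj'.
have [long_j short_j] := long_short_gap cj; have [long_j' short_j'] := long_short_gap cj'.
rewrite -eq_long -eq_short in long_j' short_j' eq_code.
set a := long_gap j in long_j long_j' eq_code; set b := short_gap j in short_j short_j' eq_code.
have a_b : a != b by apply: contraTneq long_j => ->; rewrite -leqNgt ltnW.
have eq_off t : t != a -> t != b -> gap j t = gap j' t.
  move=> t_a t_b; have [k ->] := lift2_onto a_b t_a t_b.
  have [near1 near2] := gap_near (lift2 a b k) cj.
  have [near1' near2'] := gap_near (lift2 a b k) cj'.
  by apply: (gap_code_inj near1 near2 near1' near2'); move/ffunP/(_ k): eq_code; rewrite !ffunE.
apply: tuple_from_gaps uniq_j eq0 _ _ => [t | ].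
  by move/ffunP/(_ t): eq_next; rewrite !ffunE.
apply: (eqfun_from_sums a_b (ltnW long_j) (ltnW long_j') (ltnW short_j) (ltnW short_j')) eq_off.
  by rewrite sum_j sum_j'.
by rewrite exc_j exc_j'.
Qed.

Lemma card_configs : #|configs| <= N * n.+2 ^ n.+4 * (2 * D).+1 ^ n.
Proof.
rewrite -(card_in_imset encode_inj); apply: leq_trans (max_card _) _.
by rewrite !card_prod !card_ffun !card_ord !expnS; apply: eq_leq; ring.
Qed.

End Encoding.

Local Open Scope ring_scope.

Lemma deficit_le (R : realFieldType) r N K iota :
  (1 <= K)%N -> (N <= r * (K + 1))%N -> (1 <= iota)%N ->
  ((2 * deficit r N K iota).+1)%:R
    <= 4 * ((r%:R - N%:R / (K + 1)%:R) * K%:R + iota%:R) :> R.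
Proof.
rewrite addn1 => K_ge1 le_N iota_ge1.
set k : R := K%:R; set io : R := iota%:R; set y : R := _ - _.
have k_ge1 : 1 <= k by rewrite ler1n.
have io_ge1 : 1 <= io by rewrite ler1n.
have K1E : K.+1%:R = k + 1 :> R by rewrite -addn1 natrD.
have y_def : r%:R * (k + 1) - N%:R = y * (k + 1).
  by rewrite /y K1E mulrBl mulfVK // gt_eqF //; lra.
have y_ge0 : 0 <= y.
  by rewrite /y K1E subr_ge0 ler_pdivrMr -K1E ?ltr0n // -natrM ler_nat.
have -> : ((2 * deficit r N K iota).+1)%:R = 2 * (y * (k + 1) + io) + 1 :> R.
  by rewrite /deficit -addnBAC // -addn1 natrD natrM natrD natrB // natrM K1E y_def.
have k1_ge0 : 0 <= k - 1 by rewrite subr_ge0.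
have := mulr_ge0 y_ge0 k1_ge0; nra.
Qed.

Theorem lemma5p1 (r : nat) (hr : (2 <= r)%N) :
  exists C : rat, forall (K N iota : nat),
    (1 <= K)%N -> (0 < N)%N -> (N <= r * (K + 1))%N -> (1 <= iota)%N ->
    let y : rat := r%:R - N%:R / (K + 1)%:R in
    (#|[set j : r.-tuple 'I_N | uniq j && (M K (r.+1) j == iota)]|)%:R
      <= C * N%:R * (y * K%:R + iota%:R) ^+ (r - 2).
Proof.
case: r hr => [|[|n]] // _.
exists (n.+2 ^ n.+4 * 4 ^ n)%N%:R => K N iota K_ge1 _ le_N iota_ge1.
have le_def := deficit_le rat K_ge1 le_N iota_ge1.
cbv zeta; set x := _ * _ + _ in le_def *; rewrite subn2.
apply: le_trans (_ : (N * n.+2 ^ n.+4 * (2 * deficit n.+2 N K iota).+1 ^ n)%:R <= _).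
  by rewrite ler_nat; apply: card_configs; rewrite // -[K.+1]addn1.
rewrite [X in _ <= X](_ : _ = N%:R * n.+2%:R ^+ n.+4 * (4 * x) ^+ n); last first.
  by rewrite natrM !natrX exprMn; ring.
rewrite 2!natrM !natrX; apply: ler_wpM2l; first by rewrite mulr_ge0 ?exprn_ge0.
by apply: lerXn2r; rewrite ?nnegrE ?ler0n // (le_trans _ le_def).
Qed.
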